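(* Let $\underline t\in(\mathbb{C}^* )^4$ and let $C_{\underline t}=\{R_{\underline t}=0\}\subset\mathbb{C}^3$. For $\{i,j,k\}=\{1,2,3\}$ let $\gamma_i$ be the automorphism of $C_{\underline t}$ fixing $X_j,X_k$ and sending $X_i\mapsto -X_i+X_jX_k+p_i$. Then the group homomorphism $K\to \mathrm{Aut}(C_{\underline t})$ determined by $g_i\mapsto\gamma_i$ ($i=1,2,3$) is injective.
   Context: For $\underline t=(k_0,k_1,u_0,u_1)$, put $\bar k_i=k_i-k_i^{-1}$, $\bar u_i=u_i-u_i^{-1}$, $p_1=\bar u_0\bar k_0+\bar k_1\bar u_1$, $p_2=\bar u_1\bar u_0+\bar k_0\bar k_1$, $p_3=\bar k_0\bar u_1+\bar k_1\bar u_0$, $p_0=\bar k_0^2+\bar k_1^2+\bar u_0^2+\bar u_1^2-\bar k_0\bar k_1\bar u_0\bar u_1$, and $R_{\underline t}=X_1X_2X_3-X_1^2-X_2^2-X_3^2+p_1X_1+p_2X_2+p_3X_3+p_0+4$. (Thus $\gamma_i$ exchanges the two roots of $R_{\underline t}=0$ viewed as a quadratic equation in $X_i$; each $\gamma_i$ is an involution of $C_{\underline t}$.) $K$ is the kernel of the reduction map $PGL(2,\mathbb{Z})\to PGL(2,\mathbb{Z}/2)$; it is freely generated (as a free product of three groups of order $2$) by the images of the involutions $g_1=\begin{pmatrix}1&0\\0&-1\end{pmatrix}$, $g_2=\begin{pmatrix}1&2\\0&-1\end{pmatrix}$, $g_3=\begin{pmatrix}1&0\\2&-1\end{pmatrix}$.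 *)

(* The complex numbers are modelled as R[i] = complex R
   for an arbitrary R : realType (every realType is a model of the reals). *)
From mathcomp Require Import all_boot all_order all_algebra.
From mathcomp Require Import complex.
From mathcomp Require Import reals.
Set Implicit Arguments. Unset Strict Implicit. Unset Printing Implicit Defensive.
Import Order.TTheory GRing.Theory Num.Theory.
Local Open Scope ring_scope.

Section Defs.
Variable R : realType.
Local Notation C := R[i].

Definition pt := (C * C * C)%type.

Definition bar (k : C) : C := k - k^-1.

Section Params.
Variables k0 k1 u0 u1 : C.

Definition p1 : C := bar u0 * bar k0 + bar k1 * bar u1.
Definition p2 : C := bar u1 * bar u0 + bar k0 * bar k1.
Definition p3 : C := bar k0 * bar u1 + bar k1 * bar u0.
Definition p0 : C := bar k0 ^+ 2 + bar k1 ^+ 2 + bar u0 ^+ 2 + bar u1 ^+ 2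
                     - bar k0 * bar k1 * bar u0 * bar u1.

Definition Rt (x : pt) : C :=
  let: (x1, x2, x3) := x in
  x1 * x2 * x3 - x1 ^+ 2 - x2 ^+ 2 - x3 ^+ 2 + p1 * x1 + p2 * x2 + p3 * x3 + p0 + 4.

(* the involutions gamma_1, gamma_2, gamma_3 (index i : 'I_3 stands for i+1) *)
Definition gamma (i : 'I_3) (x : pt) : pt :=
  let: (x1, x2, x3) := x in
  match val i with
  | 0 => (- x1 + x2 * x3 + p1, x2, x3)
  | 1 => (x1, - x2 + x1 * x3 + p2, x3)
  | _ => (x1, x2, - x3 + x1 * x2 + p3)
  end.

Definition gamma_word (w : seq 'I_3) : pt -> pt :=
  foldr (fun i f => gamma i \o f) id w.
End Params.
End Defs.

Definition mx2 (a b c d : int) : 'M[int]_2 :=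
  \matrix_(i < 2, j < 2)
    if i == 0 :> nat then (if j == 0 :> nat then a else b)
    else (if j == 0 :> nat then c else d).

(* g_1, g_2, g_3 (index i : 'I_3 stands for i+1) *)
Definition gmat (i : 'I_3) : 'M[int]_2 :=
  match val i with
  | 0 => mx2 1 0 0 (-1)
  | 1 => mx2 1 2 0 (-1)
  | _ => mx2 1 0 2 (-1)
  end.

Definition gmat_word (w : seq 'I_3) : 'M[int]_2 := \prod_(i <- w) gmat i.

(* trivial in PGL(2,Z) = GL(2,Z)/{±1} *)
Definition trivial_PGL (M : 'M[int]_2) : Prop := M = 1 \/ M = - 1.

(* Ping-pong.  Fix m >= |p_i| + 4 (i = 1, 2, 3) and let D_i be the set of points
   all of whose coordinates have modulus at least m and whose i-th coordinate is
   at least twice as large as the other two.  For j <> i, gamma_j maps D_i into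
   D_j, because the new j-th coordinate is essentially the product of the two old
   large coordinates.  Hence a word without two equal consecutive letters,
   starting with a and ending with c, maps D_b into D_a for any b other than a
   and c; as every D_b meets C_t, such a nonempty word acts nontrivially.
   Cancelling repeated letters, which are involutions on both sides, shows that a
   word acting trivially has product 1 in GL(2,Z). *)
From mathcomp Require Import all_boot all_order all_algebra.
From mathcomp Require Import complex.
From mathcomp Require Import reals.
From mathcomp Require Import ring lra zify.
Set Implicit Arguments. Unset Strict Implicit. Unset Printing Implicit Defensive.
Import Order.TTheory GRing.Theory Num.Theory.
Import Normc.
Local Open Scope ring_scope.

Section Dominance.
Variable R : realType.
Implicit Types (m : R) (p x y z : R[i]).

Lemma normc_ge0 x : 0 <= normc x.
Proof. by case: x => a b /=; rewrite sqrtr_ge0. Qed.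

Lemma normc_real (s : R) : 0 <= s -> normc (s%:C)%C = s.
Proof. by move=> s_ge0 /=; rewrite expr0n /= addr0 sqrtr_sqr ger0_norm. Qed.

Definition dominant m x y z : Prop :=
  [/\ m <= normc y, m <= normc z, 2 * normc y <= normc x & 2 * normc z <= normc x].

Lemma dominantC m x y z : dominant m x y z -> dominant m x z y.
Proof. by case. Qed.

Lemma dominant_flip m p x y z : normc p + 4 <= m ->
  dominant m x y z -> dominant m (- y + x * z + p) x z.
Proof.
move=> m_ge [my mz yx zx].
have p_ge0 := normc_ge0 p.
have mx : m <= normc x by lra.
suff flip : 2 * normc x <= normc (- y + x * z + p) by split; lra.
have triangle := le_normcD (- y + x * z + p + y) (- p).
have xz_eq : - y + x * z + p + y + - p = x * z by ring.
rewrite normcN xz_eq normcM in triangle.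
have := le_normcD (- y + x * z + p) y.
nra.
Qed.

(* The two roots add up to b, so one of them has modulus at least |b|/2. *)
Lemma exists_large_root (b q : R[i]) :
  exists r, r ^+ 2 - b * r + q = 0 /\ normc b <= 2 * normc r.
Proof.
pose d := sqrtc (b ^+ 2 - 4 * q).
have d2 : d ^+ 2 = b ^+ 2 - 4 * q by rewrite sqr_sqrtc.
have two_neq0 : (2 : R[i]) != 0 by rewrite pnatr_eq0.
have is_root e : e ^+ 2 = d ^+ 2 -> ((b + e) / 2) ^+ 2 - b * ((b + e) / 2) + q = 0.
  by move=> e2; rewrite -[RHS](mul0r (4^-1)) -(subrr (d ^+ 2)) -{1}e2 d2; field.
have b_eq : b = (b + d) / 2 + (b + - d) / 2 by field.
have := le_normcD ((b + d) / 2) ((b + - d) / 2); rewrite -b_eq.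
case: (lerP (normc ((b + - d) / 2)) (normc ((b + d) / 2))) => le_roots b_le.
- by exists ((b + d) / 2); split; [exact: is_root | lra].
- by exists ((b + - d) / 2); split; [apply: is_root; rewrite sqrrN | lra].
Qed.

Lemma exists_dominant_root m s p q : normc s = m -> normc p + 4 <= m ->
  exists r, r ^+ 2 - (s * s + p) * r + q = 0 /\ dominant m r s s.
Proof.
move=> s_eq m_ge; have [r [r_root r_large]] := exists_large_root (s * s + p) q.
exists r; split => //.
have p_ge0 := normc_ge0 p.
have := le_normcD (s * s + p) (- p); rewrite normcN addrK normcM s_eq.
split; nra.
Qed.

End Dominance.

Definition reduced (w : seq 'I_3) : bool := sorted (fun i j => i != j) w.

Lemma not_reduced_split (w : seq 'I_3) :
  ~~ reduced w -> exists v u (i : 'I_3), w = v ++ i :: i :: u.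
Proof.
elim: w => [|a [|b w] IHw] //=; rewrite negb_and negbK.
case/orP => [/eqP -> | /IHw [v [u [i ->]]]]; first by exists [::], w, b.
by exists (a :: v), u, i.
Qed.

Lemma exists_ord3_neq2 (a c : 'I_3) : exists b : 'I_3, (b != a) && (b != c).
Proof.
have : (0 < #|[predC [:: a; c]]|)%N.
  by rewrite -(leq_add2l #|[:: a; c]|) cardC card_ord addn1 ltnS card_size.
by case/card_gt0P => b; rewrite !inE negb_or; exists b.
Qed.

Lemma gmatK (i : 'I_3) : gmat i * gmat i = 1.
Proof.
apply/matrixP; case: i => [[|[|[|i]]] ?] // [[|[|[|r]]] ?] [[|[|[|c]]] ?] //.
all: by rewrite !mxE !big_ord_recr big_ord0 /= !mxE.
Qed.

Lemma gmat_word_cancel (v w : seq 'I_3) (i : 'I_3) :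
  gmat_word (v ++ i :: i :: w) = gmat_word (v ++ w).
Proof.
by rewrite /gmat_word !big_cat !big_cons /= [gmat i * (gmat i * _)]mulrA gmatK mul1r.
Qed.

Section PingPong.
Variables (R : realType) (k0 k1 u0 u1 : R[i]).
Local Notation p1 := (p1 k0 k1 u0 u1).
Local Notation p2 := (p2 k0 k1 u0 u1).
Local Notation p3 := (p3 k0 k1 u0 u1).
Local Notation Rt := (Rt k0 k1 u0 u1).
Local Notation gamma := (gamma k0 k1 u0 u1).
Local Notation gamma_word := (gamma_word k0 k1 u0 u1).

Lemma gammaK (i : 'I_3) : involutive (gamma i).
Proof. by case=> [[a b] c]; case: i => [[|[|[|i]]] ?] //=; congr (_, _, _); ring. Qed.

Lemma gamma_word_cat (v w : seq 'I_3) :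
  gamma_word (v ++ w) =1 gamma_word v \o gamma_word w.
Proof. by elim: v => [|i v IHv] x //=; rewrite IHv. Qed.

Lemma gamma_word_cancel (v w : seq 'I_3) (i : 'I_3) :
  gamma_word (v ++ i :: i :: w) =1 gamma_word (v ++ w).
Proof. by move=> x; rewrite !gamma_word_cat /= gammaK. Qed.

Let m : R := normc p1 + normc p2 + normc p3 + 4.

Let m_ge_p1 : normc p1 + 4 <= m.
Proof. by rewrite /m; have := normc_ge0 p2; have := normc_ge0 p3; lra. Qed.

Let m_ge_p2 : normc p2 + 4 <= m.
Proof. by rewrite /m; have := normc_ge0 p1; have := normc_ge0 p3; lra. Qed.

Let m_ge_p3 : normc p3 + 4 <= m.
Proof. by rewrite /m; have := normc_ge0 p1; have := normc_ge0 p2; lra. Qed.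

Let m_gt0 : 0 < m.
Proof. by have := normc_ge0 p1; have := m_ge_p1; lra. Qed.

Definition region (i : 'I_3) (x : pt R) : Prop :=
  let: (a, b, c) := x in
  match val i with
  | 0 => dominant m a b c
  | 1 => dominant m b a c
  | _ => dominant m c a b
  end.

Lemma gamma_region (i j : 'I_3) x : j != i -> region i x -> region j (gamma j x).
Proof.
case: x => [[a b] c]; case: i => [[|[|[|i]]] ?] //; case: j => [[|[|[|j]]] ?] //= _.
- exact: dominant_flip.
- by move/dominantC; apply: dominant_flip.
- exact: dominant_flip.
- by move/dominantC/(dominant_flip m_ge_p3)/dominantC; rewrite mulrC.
- by move/(dominant_flip m_ge_p1)/dominantC; rewrite mulrC.
- by move/dominantC/(dominant_flip m_ge_p2)/dominantC; rewrite mulrC.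
Qed.

Lemma region_disjoint (i j : 'I_3) x : region i x -> region j x -> i = j.
Proof.
case: x => [[a b] c]; case: i => [[|[|[|i]]] ?] //; case: j => [[|[|[|j]]] ?] //=.
all: try by move=> _ _; apply: val_inj.
all: by move=> [? ? ? ?] [? ? ? ?]; exfalso; have := m_gt0; lra.
Qed.

Lemma gamma_word_region (w : seq 'I_3) (a i : 'I_3) x :
  path (fun i j => i != j) a (rcons w i) -> region i x -> region a (gamma_word (a :: w) x).
Proof.
elim: w a => [|b w IHw] a /= /andP [ab w_path] x_i; apply: gamma_region ab _ => //.
exact: IHw.
Qed.

Lemma exists_region_point (i : 'I_3) : exists x, Rt x = 0 /\ region i x.
Proof.
pose s := (m%:C)%C; have s_eq : normc s = m by rewrite normc_real ?ltW.
case: i => [[|[|[|i]]] ?] //.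
(* With two coordinates equal to s, -R_t is a monic quadratic in the third one. *)
- have [r [r_root r_dom]] := exists_dominant_root
    (2 * s ^+ 2 - (p2 + p3) * s - p0 k0 k1 u0 u1 - 4) s_eq m_ge_p1.
  by exists (r, s, s); split; rewrite // -[RHS]oppr0 -r_root /Rt; ring.
- have [r [r_root r_dom]] := exists_dominant_root
    (2 * s ^+ 2 - (p1 + p3) * s - p0 k0 k1 u0 u1 - 4) s_eq m_ge_p2.
  by exists (s, r, s); split; rewrite // -[RHS]oppr0 -r_root /Rt; ring.
- have [r [r_root r_dom]] := exists_dominant_root
    (2 * s ^+ 2 - (p1 + p2) * s - p0 k0 k1 u0 u1 - 4) s_eq m_ge_p3.
  by exists (s, s, r); split; rewrite // -[RHS]oppr0 -r_root /Rt; ring.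
Qed.

Lemma reduced_trivial_action (w : seq 'I_3) : reduced w ->
  (forall x, Rt x = 0 -> gamma_word w x = x) -> w = [::].
Proof.
case: w => // a w w_red fixes; exfalso.
have [b /andP [ba bc]] := exists_ord3_neq2 a (last a w).
have [x [x_C x_b]] := exists_region_point b.
have a_path : path (fun i j => i != j) a (rcons w b).
  by rewrite rcons_path eq_sym bc andbT.
have := gamma_word_region a_path x_b; rewrite fixes //.
by move/(region_disjoint x_b)/eqP; apply/negP.
Qed.

End PingPong.

Theorem corollary2p4 (R : realType) (k0 k1 u0 u1 : R[i])
    (hk0 : k0 != 0) (hk1 : k1 != 0) (hu0 : u0 != 0) (hu1 : u1 != 0)
    (w : seq 'I_3) :
  (forall x : pt R, Rt k0 k1 u0 u1 x = 0 -> gamma_word k0 k1 u0 u1 w x = x) ->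
  trivial_PGL (gmat_word w).
Proof.
(* The ping-pong argument works for all values of p_1, p_2, p_3. *)
move=> fixes; left.
have [n] := ubnP (size w); elim: n w fixes => // n IHn w fixes /ltnSE w_size.
have [w_red | /not_reduced_split [v [u [i w_eq]]]] := boolP (reduced w).
  by rewrite (reduced_trivial_action w_red fixes) /gmat_word big_nil.
rewrite w_eq gmat_word_cancel; apply: IHn => [x x_C|].
  by rewrite -(gamma_word_cancel _ _ _ _ v u i) -w_eq fixes.
by move: w_size; rewrite w_eq !size_cat /=; lia.
Qed.
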